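(* Let $\mathbb{Q}_0,\mathbb{Q}_1$ be posets, $D_0$ a non-principal ultrafilter on $\omega$, and $Q_0\subseteq\mathbb{Q}_0$, $Q_1\subseteq\mathbb{Q}_1$ be $D_0$-linked subsets. Then $Q_0\times Q_1$ is $D_0$-linked in $\mathbb{Q}_0\times\mathbb{Q}_1$. In particular: (a) for any infinite cardinal $\mu$, the product of two $\mu$-$D_0$-linked posets is $\mu$-$D_0$-linked; (b) if $\theta$ is regular, the product of two $\theta$-$D_0$-Knaster posets is $\theta$-$D_0$-Knaster. The analogous statements hold with ''uf-linked'' in place of ''$D_0$-linked'' and ''uf-Knaster'' in place of ''$D_0$-Knaster''.
   Context: For a poset $\mathbb{P}$ and $\bar p=\langle p_n:n<\omega\rangle$ in $\mathbb{P}$, $\dot W(\bar p)$ names $\{n:p_n\in\dot G\}$. For a filter $F$ on $\omega$ containing the cofinite sets, $F^+$ is the family of subsets of $\omega$ meeting every member of $F$. $Q\subseteq\mathbb{P}$ is $F$-linked if for every sequence $\bar p$ in $Q$ there is $q\in\mathbb{P}$ forcing $\dot W(\bar p)\in F^+$; $Q$ is uf-linked if it is $D$-linked for every non-principal ultrafilter $D$ on $\omega$. $\mathbb{P}$ is $\mu$-$F$-linked ($\mu$-uf-linked) if it is the union of $\mu$ many $F$-linked (uf-linked) subsets; $\mathbb{P}$ is $\theta$-$F$-Knaster ($\theta$-uf-Knaster) if every subset of size $\theta$ contains an $F$-linked (uf-linked) subset of size $\theta$. *)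

(* Forcing notions are posets (P, le), "le p q" meaning p is
   stronger than (extends) q.  Subsets of omega are predicates nat -> Prop. *)
From Stdlib Require Import Arith.

Definition is_poset {P : Type} (le : P -> P -> Prop) : Prop :=
  (forall p, le p p) /\
  (forall p q r, le p q -> le q r -> le p r) /\
  (forall p q, le p q -> le q p -> p = q).

Definition prod_le {P0 P1 : Type} (le0 : P0 -> P0 -> Prop) (le1 : P1 -> P1 -> Prop)
  (x y : P0 * P1) : Prop := le0 (fst x) (fst y) /\ le1 (snd x) (snd y).

Definition setX {P0 P1 : Type} (Q0 : P0 -> Prop) (Q1 : P1 -> Prop) (x : P0 * P1) : Prop :=
  Q0 (fst x) /\ Q1 (snd x).

Definition is_filter (F : (nat -> Prop) -> Prop) : Prop :=
  F (fun _ => True) /\ ~ F (fun _ => False) /\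
  (forall A B, F A -> (forall n, A n -> B n) -> F B) /\
  (forall A B, F A -> F B -> F (fun n => A n /\ B n)).

Definition contains_cofinite (F : (nat -> Prop) -> Prop) : Prop :=
  forall A : nat -> Prop, (exists N, forall m, N <= m -> A m) -> F A.

Definition nonprincipal_ultrafilter (D : (nat -> Prop) -> Prop) : Prop :=
  is_filter D /\ contains_cofinite D /\
  (forall A : nat -> Prop, D A \/ D (fun n => ~ A n)).

Definition compat {P : Type} (le : P -> P -> Prop) (p q : P) : Prop :=
  exists r, le r p /\ le r q.

(* q forces  W(pbar) = {n | pbar n \in G} \in F^+ , i.e. q forces that W(pbar)
   meets every (ground-model) member of F.  Unfolded forcing relation: for each
   a \in F, the set {pbar n | n \in a} is predense below q. *)
Definition forces_W_in_Fplus {P : Type} (le : P -> P -> Prop)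
  (F : (nat -> Prop) -> Prop) (pbar : nat -> P) (q : P) : Prop :=
  forall a, F a -> forall r, le r q -> exists n, a n /\ compat le r (pbar n).

Definition F_linked {P : Type} (le : P -> P -> Prop) (F : (nat -> Prop) -> Prop)
  (Q : P -> Prop) : Prop :=
  forall pbar : nat -> P, (forall n, Q (pbar n)) ->
    exists q : P, forces_W_in_Fplus le F pbar q.

Definition uf_linked {P : Type} (le : P -> P -> Prop) (Q : P -> Prop) : Prop :=
  forall D, nonprincipal_ultrafilter D -> F_linked le D Q.

(* cardinals represented by types *)
Definition card_le (A B : Type) : Prop := exists f : A -> B, forall x y, f x = f y -> x = y.
Definition card_lt (A B : Type) : Prop := card_le A B /\ ~ card_le B A.
Definition infinite_type (I : Type) : Prop := card_le nat I.

Definition regular_type (Th : Type) : Prop :=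
  infinite_type Th /\
  forall (J : Type) (S : J -> Th -> Prop),
    card_lt J Th -> (forall j, card_lt {t : Th | S j t} Th) ->
    exists t : Th, forall j, ~ S j t.

Definition has_size {P : Type} (A : P -> Prop) (Th : Type) : Prop :=
  exists f : Th -> P, (forall x y, f x = f y -> x = y) /\
                      (forall p, A p <-> exists t, f t = p).

Definition mu_linked {P : Type} (L : (P -> Prop) -> Prop) (I : Type) : Prop :=
  exists Qs : I -> P -> Prop, (forall i, L (Qs i)) /\ (forall p, exists i, Qs i p).

Definition theta_Knaster {P : Type} (L : (P -> Prop) -> Prop) (Th : Type) : Prop :=
  forall A : P -> Prop, has_size A Th ->
    exists B : P -> Prop, (forall p, B p -> A p) /\ has_size B Th /\ L B.

(* The product of two D-linked sets is D-linked because D is an ultrafilter: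
   if q_i forces that W(p_i) meets every member of D and r_i <= q_i, then the set
   of n with r_i compatible with p_i(n) is itself in D (its complement would be a
   member of D missed by W(p_i)), so any a in D meets both of these sets and
   gives a common n for (r_0, r_1).  For mu-linkedness one reindexes the I * I
   products of the pieces along an injection I * I -> I, which exists for
   infinite I by Zorn's lemma: a maximal partial pairing D * D -> D extending a
   pairing of a countable set cannot be enlarged by a disjoint copy of D, so the
   complement of D is smaller than D and I embeds into 2 * D, hence into D.  For
   the Knaster property, regularity of theta lets one shrink any family of size
   theta to one on which a given coordinate is injective or constant; applying
   the coordinate Knaster property (or the linkedness of singletons) to each
   coordinate in turn gives a linked rectangle containing theta many points. *)

From Stdlib Require Import Classical ClassicalEpsilon FunctionalExtensionality
  PropExtensionality FinFun Cantor.
From mathcomp Require classical_sets.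

(** * Zorn's lemma and comparability of cardinals *)

Lemma pred_ext {T : Type} (X Y : T -> Prop) : (forall t, X t <-> Y t) -> X = Y.
Proof.
  intros XY. apply functional_extensionality; intro t.
  apply propositional_extensionality, XY.
Qed.

Definition chain {T : Type} (F : (T -> Prop) -> Prop) : Prop :=
  forall X Y, F X -> F Y -> (forall t, X t -> Y t) \/ (forall t, Y t -> X t).

Definition bigunion {T : Type} (F : (T -> Prop) -> Prop) (t : T) : Prop :=
  exists2 X, F X & X t.

Lemma zorn_above {T : Type} (P : (T -> Prop) -> Prop) (B : T -> Prop) :
  P B ->
  (forall F, chain F -> (exists X, F X) -> (forall X, F X -> P X) ->
     P (bigunion F)) ->
  exists A, (forall t, B t -> A t) /\ P A /\
    forall C, (forall t, A t -> C t) -> P C -> forall t, C t -> A t.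
Proof.
  intros PB P_chain.
  (* Zorn for [X |-> P (B \/ X)], on which the empty chain yields [B]. *)
  destruct (classical_sets.Zorn_bigcup (P := fun X : T -> Prop => P (fun t => B t \/ X t)))
    as [A [PA A_max]].
  - intros F FP F_chain. change (P (fun t => B t \/ bigunion F t)).
    destruct (classic (exists X, F X)) as [[X0 FX0]|F_empty].
    + set (G := fun Y => exists2 X, F X & Y = (fun t => B t \/ X t)).
      replace (fun t => B t \/ bigunion F t) with (bigunion G).
      * apply P_chain.
        -- intros Y Y' [X FX ->] [X' FX' ->].
           destruct (F_chain X X' FX FX') as [XX'|X'X]; [left|right];
             intros t [Bt|Xt]; auto.
        -- exists (fun t => B t \/ X0 t); exists X0; auto.
        -- intros Y [X FX ->]; exact (FP X FX).
      * apply pred_ext; intro t; split.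
        -- intros [Y [X FX ->] [Bt|Xt]]; [left|right; exists X]; auto.
        -- intros [Bt|[X FX Xt]].
           ++ exists (fun t => B t \/ X0 t); [exists X0|]; auto.
           ++ exists (fun t => B t \/ X t); [exists X|]; auto.
    + replace (fun t => B t \/ bigunion F t) with B; auto.
      apply pred_ext; intro t; split; auto.
      intros [Bt|[X FX _]]; [auto|exfalso; eauto].
  - exists (fun t => B t \/ A t); split; [|split]; auto.
    intros C AC PC t Ct. right. apply NNPP; intro nAt.
    apply (A_max C).
    + split; [intros s As; auto|intro CA; exact (nAt (CA t Ct))].
    + replace (fun t => B t \/ C t) with C; auto.
      apply pred_ext; intro s; split; auto. intros [Bs|Cs]; auto.
Qed.

Lemma bigunion_pairwise {T : Type} (Q : T -> T -> Prop) F :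
  chain F -> (forall X, F X -> forall a b, X a -> X b -> Q a b) ->
  forall a b, bigunion F a -> bigunion F b -> Q a b.
Proof.
  intros F_chain FQ a b [X FX Xa] [Y FY Yb].
  destruct (F_chain X Y FX FY); [apply (FQ Y)|apply (FQ X)]; auto.
Qed.

Definition functional_graph {X Y : Type} (R : X * Y -> Prop) : Prop :=
  forall x y y', R (x, y) -> R (x, y') -> y = y'.

Definition injective_graph {X Y : Type} (R : X * Y -> Prop) : Prop :=
  forall x x' y, R (x, y) -> R (x', y) -> x = x'.

Lemma functional_graph_bigunion {X Y : Type} (F : (X * Y -> Prop) -> Prop) :
  chain F -> (forall R, F R -> functional_graph R) ->
  functional_graph (bigunion F).
Proof.
  intros F_chain FR x y y' Ry Ry'.
  refine (bigunion_pairwise (fun a b => fst a = fst b -> snd a = snd b) F F_chain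
            _ (x, y) (x, y') Ry Ry' eq_refl).
  intros R HR [a1 a2] [b1 b2] Ra Rb E; simpl in *; subst; eapply FR; eauto.
Qed.

Lemma injective_graph_bigunion {X Y : Type} (F : (X * Y -> Prop) -> Prop) :
  chain F -> (forall R, F R -> injective_graph R) ->
  injective_graph (bigunion F).
Proof.
  intros F_chain FR x x' y Rx Rx'.
  refine (bigunion_pairwise (fun a b => snd a = snd b -> fst a = fst b) F F_chain
            _ (x, y) (x', y) Rx Rx' eq_refl).
  intros R HR [a1 a2] [b1 b2] Ra Rb E; simpl in *; subst; eapply FR; eauto.
Qed.

Lemma injective_graph_card_le {X Y : Type} (R : X * Y -> Prop) :
  injective_graph R -> (forall x, exists y, R (x, y)) -> card_le X Y.
Proof.
  intros R_inj R_total.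
  destruct (choice (fun x y => R (x, y)) R_total) as [f Rf].
  exists f; intros x x' E. apply (R_inj x x' (f x')); [rewrite <- E|]; apply Rf.
Qed.

Lemma card_le_total (X Y : Type) : card_le X Y \/ card_le Y X.
Proof.
  set (P := fun R : X * Y -> Prop => functional_graph R /\ injective_graph R).
  destruct (zorn_above P (fun _ => False)) as [R [_ [[R_fun R_inj] R_max]]].
  - split; intros ? ? ? [].
  - intros F F_chain _ FP; split.
    + apply functional_graph_bigunion; auto; intros R FR; apply FP, FR.
    + apply injective_graph_bigunion; auto; intros R FR; apply FP, FR.
  - destruct (classic (forall x, exists y, R (x, y))) as [R_total|[x0 Hx0]%not_all_ex_not].
    { left; exact (injective_graph_card_le R R_inj R_total). }
    destruct (classic (forall y, exists x, R (x, y))) as [R_onto|[y0 Hy0]%not_all_ex_not].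
    { right; apply (injective_graph_card_le (fun p => R (snd p, fst p))); auto.
      intros y y' x; apply R_fun. }
    exfalso. apply Hx0; exists y0.
    (* Otherwise [R] extends by the unmatched pair [(x0, y0)]. *)
    apply (R_max (fun p => R p \/ p = (x0, y0))); auto.
    split.
    + intros x y y' [Ry|E] [Ry'|E']; try congruence.
      * eapply R_fun; eauto.
      * injection E' as -> ->; exfalso; eauto.
      * injection E as -> ->; exfalso; eauto.
    + intros x x' y [Rx|E] [Rx'|E']; try congruence.
      * eapply R_inj; eauto.
      * injection E' as -> ->; exfalso; eauto.
      * injection E as -> ->; exfalso; eauto.
Qed.

(** * An infinite type is equinumerous with its square *)

Definition injective_on {A B : Type} (D : A -> Prop) (f : A -> B) : Prop :=
  forall x y, D x -> D y -> f x = f y -> x = y.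

Definition square {A : Type} (D : A -> Prop) (p : A * A) : Prop :=
  D (fst p) /\ D (snd p).

Lemma injective_on_inverse {A B : Type} (D : A -> Prop) (h : A -> B) :
  inhabited A -> injective_on D h -> exists u : B -> A, forall x, D x -> u (h x) = x.
Proof.
  intros inh h_inj. exists (fun y => epsilon inh (fun x => D x /\ h x = y)).
  intros x Dx.
  destruct (epsilon_spec inh (fun x' => D x' /\ h x' = h x)) as [Dx' E]; eauto.
Qed.

Lemma proj1_sig_inj {A : Type} (P : A -> Prop) : Injective (@proj1_sig A P).
Proof. exact (eq_sig_hprop (fun x => proof_irrelevance (P x))). Qed.

Lemma card_le_sig_on {A : Type} (D E : A -> Prop) :
  inhabited A -> card_le {x | D x} {x | E x} ->
  exists u : A -> A, injective_on D u /\ forall x, D x -> E (u x).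
Proof.
  intros [a] [j j_inj].
  exists (fun x => match excluded_middle_informative (D x) with
                   | left Dx => proj1_sig (j (exist _ x Dx))
                   | right _ => a
                   end).
  split.
  - intros x y Dx Dy.
    destruct (excluded_middle_informative (D x)) as [Dx'|]; [|contradiction].
    destruct (excluded_middle_informative (D y)) as [Dy'|]; [|contradiction].
    intro Exy. exact (f_equal (@proj1_sig _ _) (j_inj _ _ (proj1_sig_inj _ _ _ Exy))).
  - intros x Dx. destruct (excluded_middle_informative (D x)) as [Dx'|]; [|contradiction].
    exact (proj2_sig (j _)).
Qed.

Lemma square_injection_union (I : Type) (D E : I -> Prop) (g : I * I -> I)
  (d0 d1 : I) (u : I -> I) :
  injective_on (square D) g -> (forall p, square D p -> D (g p)) ->
  D d0 -> D d1 -> d0 <> d1 ->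
  injective_on (fun x => E x /\ ~ D x) u -> (forall x, E x -> ~ D x -> D (u x)) ->
  let D' := fun x => D x \/ E x in
  exists g' : I * I -> I, injective_on (square D') g' /\
    forall p, square D' p -> D (g' p).
Proof.
  intros g_inj g_D D0 D1 d01 u_inj u_D D'.
  assert (g_eq : forall a b a' b', D a -> D b -> D a' -> D b' ->
            g (a, b) = g (a', b') -> a = a' /\ b = b').
  { intros a b a' b' Da Db Da' Db' E0.
    assert (H := g_inj (a, b) (a', b') (conj Da Db) (conj Da' Db') E0).
    injection H; auto. }
  assert (u_D' : forall x, D' x -> ~ D x -> D (u x))
    by (intros x Hx nDx; apply u_D; unfold D' in *; tauto).
  assert (code : exists c, injective_on D' c /\ forall x, D' x -> D (c x)).
  { exists (fun x => if excluded_middle_informative (D x) then g (d0, x) else g (d1, u x)).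
    split.
    - intros x y Hx Hy E0.
      destruct (excluded_middle_informative (D x)) as [Dx|nDx],
        (excluded_middle_informative (D y)) as [Dy|nDy];
        apply g_eq in E0 as [E_tag E_val]; auto; try congruence.
      apply u_inj; auto; split; unfold D' in *; tauto.
    - intros x Hx; destruct (excluded_middle_informative (D x));
        apply g_D; split; simpl; auto. }
  destruct code as [c [c_inj c_D]].
  exists (fun p => g (c (fst p), c (snd p))); split.
  - intros [x y] [x' y'] [Hx Hy] [Hx' Hy'] E0; simpl in *.
    apply g_eq in E0 as [Ex Ey]; auto. f_equal; apply c_inj; auto.
  - intros p [Hx Hy]; apply g_D; split; apply c_D; auto.
Qed.

(* Keeps [injection] from unfolding Cantor's pairing function. *)
Local Opaque to_nat.

Section Pairing.
Variable I : Type.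

Definition pairing_dom (S : (I * I) * I -> Prop) (x : I) : Prop :=
  exists k, S ((x, x), k).

(* [S] is the graph of an injection from [D * D] into [D], [D = pairing_dom S]. *)
Definition is_pairing (S : (I * I) * I -> Prop) : Prop :=
  functional_graph S /\ injective_graph S /\
  (forall p, square (pairing_dom S) p -> exists k, S (p, k)) /\
  (forall p k, S (p, k) -> square (pairing_dom S) p /\ pairing_dom S k).

Lemma pairing_dom_sub (S S' : (I * I) * I -> Prop) x :
  (forall z, S z -> S' z) -> pairing_dom S x -> pairing_dom S' x.
Proof. intros SS' [k Sk]; exists k; auto. Qed.

Lemma is_pairing_bigunion (F : ((I * I) * I -> Prop) -> Prop) :
  chain F -> (forall S, F S -> is_pairing S) -> is_pairing (bigunion F).
Proof.
  intros F_chain FP.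
  assert (dom_sub : forall S x, F S -> pairing_dom S x -> pairing_dom (bigunion F) x).
  { intros S x FS. apply pairing_dom_sub; intros z Sz; exists S; auto. }
  split; [|split; [|split]].
  - apply functional_graph_bigunion; auto; intros S FS; apply FP, FS.
  - apply injective_graph_bigunion; auto; intros S FS; apply FP, FS.
  - intros [x y] [[k [S FS Sx]] [l [S' FS' Sy]]]; simpl in *.
    assert (total : forall T, F T -> pairing_dom T x -> pairing_dom T y ->
                    exists k, bigunion F ((x, y), k)).
    { intros T FT Tx Ty. destruct (proj1 (proj2 (proj2 (FP T FT))) (x, y)) as [m Tm].
      { split; auto. }
      exists m, T; auto. }
    destruct (F_chain S S' FS FS') as [SS'|S'S].
    + apply (total S' FS'); [exists k; auto|exists l; exact Sy].
    + apply (total S FS); [exists k; exact Sx|exists l; auto].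
  - intros p k [S FS Sp].
    destruct (proj2 (proj2 (proj2 (FP S FS))) p k Sp) as [[Sx Sy] Sk].
    split; [split|]; eapply dom_sub; eauto.
Qed.

Definition nat_pairing (e : nat -> I) (z : (I * I) * I) : Prop :=
  exists a b, z = ((e a, e b), e (to_nat (a, b))).

Lemma pairing_dom_nat (e : nat -> I) n : pairing_dom (nat_pairing e) (e n).
Proof. exists (e (to_nat (n, n))), n, n; reflexivity. Qed.

Lemma is_pairing_nat (e : nat -> I) : Injective e -> is_pairing (nat_pairing e).
Proof.
  intros e_inj.
  assert (dom_nat : forall x, pairing_dom (nat_pairing e) x -> exists n, x = e n).
  { intros x [k [a [b E]]]. injection E as -> _ _; eauto. }
  split; [|split; [|split]].
  - intros [x y] k k' [a [b E]] [a' [b' E']].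
    injection E as -> -> ->. injection E' as Ea Eb ->.
    apply e_inj in Ea; apply e_inj in Eb; subst; reflexivity.
  - intros [x y] [x' y'] k [a [b E]] [a' [b' E']].
    injection E as -> -> Ek. injection E' as -> -> Ek'.
    rewrite Ek in Ek'. apply e_inj, to_nat_inj in Ek'. injection Ek' as -> ->.
    reflexivity.
  - intros [x y] [Hx Hy]; simpl in *.
    destruct (dom_nat x Hx) as [a ->], (dom_nat y Hy) as [b ->].
    exists (e (to_nat (a, b))), a, b; reflexivity.
  - intros p k [a [b E]]. injection E as -> ->.
    split; [split|]; apply pairing_dom_nat.
Qed.

Lemma pairing_injection (S : (I * I) * I -> Prop) :
  inhabited I -> is_pairing S ->
  let D := pairing_dom S in
  exists g : I * I -> I, injective_on (square D) g /\ forall p, square D p -> D (g p).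
Proof.
  intros [i] [_ [S_inj [S_total S_dom]]] D.
  destruct (choice (fun p k => square D p -> S (p, k))) as [g Sg].
  { intro p. destruct (classic (square D p)) as [Hp|nHp].
    - destruct (S_total p Hp) as [k Sk]; eauto.
    - exists i; contradiction. }
  exists g; split.
  - intros p p' Hp Hp' E. apply (S_inj p p' (g p)); [|rewrite E]; auto.
  - intros p Hp; apply (S_dom p), Sg, Hp.
Qed.

Lemma pairing_union (S : (I * I) * I -> Prop) (D' : I -> Prop) (f : I * I -> I) :
  let new p := square D' p /\ ~ square (pairing_dom S) p in
  is_pairing S -> (forall x, pairing_dom S x -> D' x) ->
  injective_on new f -> (forall p, new p -> D' (f p) /\ ~ pairing_dom S (f p)) ->
  exists S', (forall z, S z -> S' z) /\ is_pairing S' /\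
    forall x, D' x -> pairing_dom S' x.
Proof.
  intros new [S_fun [S_inj [S_total S_dom]]] DD' f_inj f_new.
  set (S' := fun z : (I * I) * I => S z \/ (new (fst z) /\ snd z = f (fst z))).
  assert (dom' : forall x, pairing_dom S' x <-> D' x).
  { intro x; split.
    - intros [k [Sk|[[[Dx _] _] _]]]; [apply DD'; exists k; exact Sk|exact Dx].
    - intro D'x. destruct (classic (pairing_dom S x)) as [[k Sk]|nDx].
      + exists k; left; exact Sk.
      + exists (f (x, x)); right; repeat split; auto. intros [Dx _]; exact (nDx Dx). }
  exists S'; split; [intros; left; auto|split; [split; [|split; [|split]]|]].
  - intros p k k' [Sk|[new_p Ek]] [Sk'|[new_p' Ek']]; simpl in *.
    + eapply S_fun; eauto.
    + exfalso; apply (proj2 new_p'), (S_dom p k Sk).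
    + exfalso; apply (proj2 new_p), (S_dom p k' Sk').
    + congruence.
  - intros p p' k [Sk|[new_p Ek]] [Sk'|[new_p' Ek']]; simpl in *.
    + eapply S_inj; eauto.
    + exfalso; apply (proj2 (f_new p' new_p')); rewrite <- Ek'; exact (proj2 (S_dom p k Sk)).
    + exfalso; apply (proj2 (f_new p new_p)); rewrite <- Ek; exact (proj2 (S_dom p' k Sk')).
    + apply f_inj; congruence.
  - intros p [Hx Hy]. apply dom' in Hx; apply dom' in Hy.
    destruct (classic (square (pairing_dom S) p)) as [Hp|nHp].
    + destruct (S_total p Hp) as [k Sk]; exists k; left; exact Sk.
    + exists (f p); right; split; [split; [split|]|]; auto.
  - intros p k [Sk|[new_p Ek]]; simpl in *.
    + destruct (S_dom p k Sk) as [[Hx Hy] Hk].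
      split; [split|]; apply dom', DD'; auto.
    + subst k. destruct (f_new p new_p) as [Hf _]. destruct new_p as [[Hx Hy] _].
      split; [split|]; apply dom'; auto.
  - intros x; apply dom'.
Qed.

Lemma pairing_extend (S : (I * I) * I -> Prop) (d0 d1 : I) (h : I -> I) :
  let D := pairing_dom S in
  is_pairing S -> D d0 -> D d1 -> d0 <> d1 ->
  injective_on D h -> (forall x, D x -> ~ D (h x)) ->
  exists S', (forall z, S z -> S' z) /\ is_pairing S' /\ pairing_dom S' (h d0).
Proof.
  intros D S_pair D0 D1 d01 h_inj h_out.
  assert (inh : inhabited I) by exact (inhabits d0).
  destruct (pairing_injection S inh S_pair) as [g [g_inj g_D]].
  destruct (injective_on_inverse D h inh h_inj) as [u uh].
  set (E := fun x => exists v, D v /\ x = h v).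
  destruct (square_injection_union I D E g d0 d1 u g_inj g_D D0 D1 d01)
    as [g' [g'_inj g'_D]].
  { intros x y [[v [Dv ->]] _] [[w [Dw ->]] _] Euv. rewrite !uh in Euv; congruence. }
  { intros x [v [Dv ->]] _. rewrite uh; auto. }
  (* the new pairs are sent injectively into [h D], which is disjoint from [D] *)
  destruct (pairing_union S (fun x => D x \/ E x) (fun p => h (g' p)) S_pair)
    as [S' [SS' [S'_pair S'_dom]]].
  - intros x Dx; left; exact Dx.
  - intros p p' [Hp _] [Hp' _] E0. apply g'_inj, h_inj; auto.
  - intros p [Hp _]. split; [right; exists (g' p)|apply h_out]; auto.
  - exists S'; split; [|split]; auto. apply S'_dom; right; exists d0; auto.
Qed.

Lemma infinite_card_square : infinite_type I -> card_le (I * I) I.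
Proof.
  intros [e e_inj].
  destruct (zorn_above is_pairing (nat_pairing e)) as [A [eA [A_pair A_max]]].
  { exact (is_pairing_nat e e_inj). }
  { intros F F_chain _ FP; apply is_pairing_bigunion; auto. }
  set (D := pairing_dom A).
  assert (De : forall n, D (e n)).
  { intro n; apply (pairing_dom_sub (nat_pairing e)); auto; apply pairing_dom_nat. }
  assert (e01 : e 0 <> e 1) by (intro E; apply e_inj in E; discriminate).
  assert (inh : inhabited I) by exact (inhabits (e 0)).
  destruct (pairing_injection A inh A_pair) as [g [g_inj g_D]].
  destruct (card_le_total {x | ~ D x} {x | D x}) as [small|large].
  - destruct (card_le_sig_on (fun x => ~ D x) D inh small) as [u [u_inj u_D]].
    destruct (square_injection_union I D (fun _ => True) g (e 0) (e 1) u g_inj g_D)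
      as [g' [g'_inj _]]; auto.
    { intros x y [_ nDx] [_ nDy]; apply u_inj; auto. }
    exists g'; intros p p' E. apply g'_inj; auto; split; right; trivial.
  - (* [D] is maximal, so it cannot be enlarged by a disjoint copy of itself *)
    exfalso.
    destruct (card_le_sig_on D (fun x => ~ D x) inh large) as [h [h_inj h_out]].
    destruct (pairing_extend A (e 0) (e 1) h A_pair (De 0) (De 1) e01 h_inj h_out)
      as [S [AS [S_pair Sh]]].
    apply (h_out (e 0) (De 0)).
    apply (pairing_dom_sub S); auto. intros z Sz; exact (A_max S AS S_pair z Sz).
Qed.
End Pairing.

(** * Thinning families of regular size *)

Lemma regular_split (Th Y : Type) (g : Th -> Y) :
  regular_type Th ->
  (exists s : Th -> Th, Injective s /\ Injective (fun t => g (s t))) \/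
  (exists (y : Y) (s : Th -> Th), Injective s /\ forall t, g (s t) = y).
Proof.
  intros [_ Th_reg].
  set (J := {y | exists t, g t = y}).
  destruct (choice (fun (j : J) t => g t = proj1_sig j) (fun j => proj2_sig j)) as [r gr].
  destruct (classic (card_le Th J)) as [[m m_inj]|J_small].
  - left. exists (fun t => r (m t)).
    assert (grm_inj : Injective (fun t => g (r (m t)))).
    { intros a b E. rewrite !gr in E. apply m_inj, proj1_sig_inj, E. }
    split; auto. intros a b E. apply grm_inj; simpl; congruence.
  - assert (J_lt : card_lt J Th).
    { split; auto. exists r. intros j j' E.
      apply proj1_sig_inj. rewrite <- !gr, E. reflexivity. }
    destruct (classic (forall j : J, card_lt {t | g t = proj1_sig j} Th))
      as [fibers_small|[j fiber_big]%not_all_ex_not].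
    + exfalso.
      destruct (Th_reg J (fun j t => g t = proj1_sig j) J_lt fibers_small) as [t Ht].
      exact (Ht (exist _ (g t) (ex_intro _ t eq_refl)) eq_refl).
    + right.
      assert (fiber_large : card_le Th {t | g t = proj1_sig j}).
      { apply NNPP; intro N; apply fiber_big; split; auto.
        exists (@proj1_sig _ _); apply proj1_sig_inj. }
      destruct fiber_large as [m m_inj].
      exists (proj1_sig j), (fun t => proj1_sig (m t)); split.
      * intros a b E; apply m_inj, proj1_sig_inj, E.
      * intro t; exact (proj2_sig (m t)).
Qed.

Lemma knaster_refine {P Th : Type} (L : (P -> Prop) -> Prop) :
  regular_type Th -> theta_Knaster L Th -> (forall y, L (fun p => p = y)) ->
  forall u : Th -> P, exists (B : P -> Prop) (tau : Th -> Th),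
    L B /\ Injective tau /\ forall t, B (u (tau t)).
Proof.
  intros Th_reg K L_single u.
  destruct (regular_split Th P u Th_reg) as [[s [s_inj us_inj]]|[y [s [s_inj us_y]]]].
  - destruct (K (fun p => exists t, u (s t) = p)) as [B [B_sub [[b [b_inj b_B]] LB]]].
    { exists (fun t => u (s t)); split; [exact us_inj|reflexivity]. }
    destruct (choice (fun t t' => u (s t') = b t)) as [r ur].
    { intro t; apply B_sub, b_B; eauto. }
    exists B, (fun t => s (r t)); split; [exact LB|split].
    + intros a a' E. apply b_inj. rewrite <- !ur. congruence.
    + intro t. rewrite ur. apply b_B; eauto.
  - exists (fun p => p = y), s; auto.
Qed.

Lemma theta_Knaster_prod {P0 P1 Th : Type} (L0 : (P0 -> Prop) -> Prop)
  (L1 : (P1 -> Prop) -> Prop) (L : (P0 * P1 -> Prop) -> Prop) :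
  regular_type Th ->
  (forall y, L0 (fun p => p = y)) -> (forall y, L1 (fun p => p = y)) ->
  (forall Q0 Q1, L0 Q0 -> L1 Q1 -> L (setX Q0 Q1)) ->
  (forall Q Q', (forall p, Q' p -> Q p) -> L Q -> L Q') ->
  theta_Knaster L0 Th -> theta_Knaster L1 Th -> theta_Knaster L Th.
Proof.
  intros Th_reg L0_single L1_single L_setX L_sub K0 K1 A [f [f_inj f_A]].
  destruct (knaster_refine L0 Th_reg K0 L0_single (fun t => fst (f t)))
    as [B0 [tau0 [LB0 [tau0_inj B0f]]]].
  destruct (knaster_refine L1 Th_reg K1 L1_single (fun t => snd (f (tau0 t))))
    as [B1 [tau1 [LB1 [tau1_inj B1f]]]].
  set (F := fun t => f (tau0 (tau1 t))).
  exists (fun p => exists t, F t = p); split; [|split].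
  - intros p [t <-]. apply f_A; exists (tau0 (tau1 t)); reflexivity.
  - exists F; split; [|reflexivity].
    intros a b E; apply tau1_inj, tau0_inj, f_inj, E.
  - apply (L_sub (setX B0 B1)); auto.
    intros p [t <-]; split; [apply B0f|apply B1f].
Qed.

Lemma mu_linked_prod {P0 P1 I : Type} (L0 : (P0 -> Prop) -> Prop)
  (L1 : (P1 -> Prop) -> Prop) (L : (P0 * P1 -> Prop) -> Prop) :
  inhabited I -> card_le (I * I) I ->
  (forall Q0 Q1, L0 Q0 -> L1 Q1 -> L (setX Q0 Q1)) ->
  mu_linked L0 I -> mu_linked L1 I -> mu_linked L I.
Proof.
  intros [i] [m m_inj] L_setX [Q0 [LQ0 Q0_cover]] [Q1 [LQ1 Q1_cover]].
  destruct (injective_on_inverse (fun _ => True) m (inhabits (i, i))) as [u um].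
  { intros a b _ _; apply m_inj. }
  exists (fun k => setX (Q0 (fst (u k))) (Q1 (snd (u k)))); split.
  - intro k; apply L_setX; auto.
  - intros [p0 p1].
    destruct (Q0_cover p0) as [i0 H0], (Q1_cover p1) as [i1 H1].
    exists (m (i0, i1)). unfold setX; rewrite um; auto.
Qed.

(** * Linked sets modulo an ultrafilter *)

Definition ultrafilter (D : (nat -> Prop) -> Prop) : Prop :=
  is_filter D /\ forall A, D A \/ D (fun n => ~ A n).

Lemma nonprincipal_ultrafilter_ultrafilter D : nonprincipal_ultrafilter D -> ultrafilter D.
Proof. intros [D_filter [_ D_ultra]]; split; auto. Qed.

Lemma filter_nonempty (F : (nat -> Prop) -> Prop) A : is_filter F -> F A -> exists n, A n.
Proof.
  intros [_ [F_proper [F_up _]]] FA. apply NNPP; intro N.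
  apply F_proper, (F_up A); auto. intros n An; apply N; eauto.
Qed.

Lemma forces_compat_ultrafilter {P : Type} (le : P -> P -> Prop) D pbar q r :
  ultrafilter D -> forces_W_in_Fplus le D pbar q -> le r q ->
  D (fun n => compat le r (pbar n)).
Proof.
  intros [_ D_ultra] Hq rq.
  destruct (D_ultra (fun n => compat le r (pbar n))) as [C|C]; auto.
  destruct (Hq _ C r rq) as [n [nC Cn]]; contradiction.
Qed.

Lemma F_linked_setX {P0 P1 : Type} (le0 : P0 -> P0 -> Prop) (le1 : P1 -> P1 -> Prop)
  D Q0 Q1 :
  ultrafilter D -> F_linked le0 D Q0 -> F_linked le1 D Q1 ->
  F_linked (prod_le le0 le1) D (setX Q0 Q1).
Proof.
  intros D_uf L0 L1 pbar Hp.
  destruct (L0 (fun n => fst (pbar n))) as [q0 H0]; [intro n; apply Hp|].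
  destruct (L1 (fun n => snd (pbar n))) as [q1 H1]; [intro n; apply Hp|].
  exists (q0, q1). intros a Da [r0 r1] [r0q0 r1q1]; simpl in *.
  pose proof (forces_compat_ultrafilter le0 D _ q0 r0 D_uf H0 r0q0) as C0.
  pose proof (forces_compat_ultrafilter le1 D _ q1 r1 D_uf H1 r1q1) as C1.
  destruct D_uf as [D_filter _].
  pose proof D_filter as [_ [_ [_ D_inter]]].
  destruct (filter_nonempty D _ D_filter (D_inter _ _ Da (D_inter _ _ C0 C1)))
    as [n [an [[s0 [s0r0 s0p]] [s1 [s1r1 s1p]]]]].
  exists n; split; auto. exists (s0, s1); split; split; auto.
Qed.

Lemma F_linked_sub {P : Type} (le : P -> P -> Prop) D (Q Q' : P -> Prop) :
  (forall p, Q' p -> Q p) -> F_linked le D Q -> F_linked le D Q'.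
Proof. intros Q'Q L pbar Hp. apply L; auto. Qed.

Lemma F_linked_singleton {P : Type} (le : P -> P -> Prop) D (y : P) :
  (forall p, le p p) -> is_filter D -> F_linked le D (fun p => p = y).
Proof.
  intros le_refl D_filter pbar Hp. exists y. intros a Da r ry.
  destruct (filter_nonempty D a D_filter Da) as [n an].
  exists n; split; auto. exists r; rewrite Hp; auto.
Qed.

Lemma uf_linked_setX {P0 P1 : Type} (le0 : P0 -> P0 -> Prop) (le1 : P1 -> P1 -> Prop)
  Q0 Q1 :
  uf_linked le0 Q0 -> uf_linked le1 Q1 -> uf_linked (prod_le le0 le1) (setX Q0 Q1).
Proof.
  intros L0 L1 D HD.
  apply F_linked_setX; auto; apply nonprincipal_ultrafilter_ultrafilter, HD.
Qed.

Lemma uf_linked_sub {P : Type} (le : P -> P -> Prop) (Q Q' : P -> Prop) :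
  (forall p, Q' p -> Q p) -> uf_linked le Q -> uf_linked le Q'.
Proof. intros Q'Q L D HD. apply (F_linked_sub le D Q); auto. Qed.

Lemma uf_linked_singleton {P : Type} (le : P -> P -> Prop) (y : P) :
  (forall p, le p p) -> uf_linked le (fun p => p = y).
Proof. intros le_refl D [D_filter _]. apply F_linked_singleton; auto. Qed.

Theorem theorem3p19 :
  forall (P0 : Type) (le0 : P0 -> P0 -> Prop) (P1 : Type) (le1 : P1 -> P1 -> Prop),
  is_poset le0 -> is_poset le1 ->
  (forall D : (nat -> Prop) -> Prop, nonprincipal_ultrafilter D ->
     (forall (Q0 : P0 -> Prop) (Q1 : P1 -> Prop),
        F_linked le0 D Q0 -> F_linked le1 D Q1 ->
        F_linked (prod_le le0 le1) D (setX Q0 Q1)) /\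
     (forall I : Type, infinite_type I ->
        mu_linked (F_linked le0 D) I -> mu_linked (F_linked le1 D) I ->
        mu_linked (F_linked (prod_le le0 le1) D) I) /\
     (forall Th : Type, regular_type Th ->
        theta_Knaster (F_linked le0 D) Th -> theta_Knaster (F_linked le1 D) Th ->
        theta_Knaster (F_linked (prod_le le0 le1) D) Th)) /\
  ((forall (Q0 : P0 -> Prop) (Q1 : P1 -> Prop),
      uf_linked le0 Q0 -> uf_linked le1 Q1 ->
      uf_linked (prod_le le0 le1) (setX Q0 Q1)) /\
   (forall I : Type, infinite_type I ->
      mu_linked (uf_linked le0) I -> mu_linked (uf_linked le1) I ->
      mu_linked (uf_linked (prod_le le0 le1)) I) /\
   (forall Th : Type, regular_type Th ->
      theta_Knaster (uf_linked le0) Th -> theta_Knaster (uf_linked le1) Th ->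
      theta_Knaster (uf_linked (prod_le le0 le1)) Th)).
Proof.
  intros P0 le0 P1 le1 [le0_refl _] [le1_refl _].
  assert (infinite_inhabited : forall I, infinite_type I -> inhabited I)
    by (intros I [e _]; exact (inhabits (e 0))).
  split.
  - intros D HD. pose proof (nonprincipal_ultrafilter_ultrafilter D HD) as D_uf.
    split; [|split].
    + intros Q0 Q1; apply F_linked_setX, D_uf.
    + intros I HI; apply mu_linked_prod; auto using infinite_card_square.
      intros Q0 Q1; apply F_linked_setX, D_uf.
    + intros Th Th_reg; apply theta_Knaster_prod; auto.
      * intro y; apply F_linked_singleton; [exact le0_refl|apply D_uf].
      * intro y; apply F_linked_singleton; [exact le1_refl|apply D_uf].
      * intros Q0 Q1; apply F_linked_setX, D_uf.
      * apply F_linked_sub.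
  - split; [|split].
    + apply uf_linked_setX.
    + intros I HI; apply mu_linked_prod; auto using infinite_card_square.
      apply uf_linked_setX.
    + intros Th Th_reg; apply theta_Knaster_prod; auto using uf_linked_singleton.
      * apply uf_linked_setX.
      * apply uf_linked_sub.
Qed.
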